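(* Let $\Omega$ be a finite set with $|\Omega|=n$, $(H_i\mid i\in\Omega)$ finite abelian groups with $|H_i|\geqslant2$ for all $i$, $\mathbf{H}=\prod_{i\in\Omega}H_i$, and $\mathbf{P}=(\Omega,\preccurlyeq_{\mathbf{P}})$ a poset. Then $\mathbf{P}$ is hierarchical if and only if for all $\alpha,\gamma\in\hat{\mathbf{H}}$, $\mathrm{wt}_{\overline{\mathbf{P}}}(\alpha)=\mathrm{wt}_{\overline{\mathbf{P}}}(\gamma)$ implies $\deg(F(\alpha))=\deg(F(\gamma))$.
   Context: $\hat{\mathbf{H}}$ is the character group of $\mathbf{H}$, identified with $\prod_i\hat{H_i}$ via $\alpha(\beta)=\prod_i\alpha_{(i)}(\beta_{(i)})$; $\mathrm{supp}$ of a codeword is the set of coordinates where it is not the identity. For a poset $\mathbf{Q}$ on $\Omega$, $\langle B\rangle_{\mathbf{Q}}=\{a:\exists b\in B, a\preccurlyeq_{\mathbf{Q}}b\}$ and $\mathrm{wt}_{\mathbf{Q}}(\beta)=|\langle\mathrm{supp}(\beta)\rangle_{\mathbf{Q}}|$. $\overline{\mathbf{P}}$ is the dual poset. For $\alpha\in\hat{\mathbf{H}}$, $F(\alpha)=\sum_{l=0}^{n}\big(\sum_{\beta\in\mathbf{H},\ \mathrm{wt}_{\mathbf{P}}(\beta)=l}\alpha(\beta)\big)x^l\in\mathbb{C}[x]$. $\mathrm{len}(y)$ is the largest cardinality of a chain in $\mathbf{P}$ with greatest element $y$; $\mathbf{P}$ is hierarchical if $\mathrm{len}(u)+1\leqslant\mathrm{len}(v)$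 implies $u\preccurlyeq_{\mathbf{P}}v$. *)

From HB Require Import structures.
From mathcomp Require Import all_boot all_order all_algebra all_field.
Set Implicit Arguments. Unset Strict Implicit. Unset Printing Implicit Defensive.
Import Order.TTheory GRing.Theory Num.Theory.
Local Open Scope ring_scope.

(* Finite abelian groups are modelled as finZmodType (additive notation).
   Characters take values in algC (the algebraic complex numbers). *)

Section Defs.
Variable Omega : finType.

Definition is_poset (le : rel Omega) : Prop :=
  [/\ reflexive le, antisymmetric le & transitive le].

Definition dual_rel (le : rel Omega) : rel Omega := fun a b => le b a.

Definition ideal (le : rel Omega) (B : {set Omega}) : {set Omega} :=
  [set a | [exists b in B, le a b]].

Definition is_chain (le : rel Omega) (C : {set Omega}) : bool :=
  [forall x in C, forall y in C, le x y || le y x].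

Definition len (le : rel Omega) (y : Omega) : nat :=
  \max_(C : {set Omega} | [&& is_chain le C, y \in C & [forall c in C, le c y]]) #|C|.

Definition hierarchical (le : rel Omega) : Prop :=
  forall u v, (len le u + 1 <= len le v)%N -> le u v.

Variable H : Omega -> finZmodType.

Definition codeword := {dffun forall i : Omega, H i}.

Definition supp (beta : codeword) : {set Omega} := [set i | beta i != 0].

Definition wt (le : rel Omega) (beta : codeword) : nat := #|ideal le (supp beta)|.

Definition is_character (G : finZmodType) (chi : G -> algC) : Prop :=
  chi 0 = 1 /\ forall a b, chi (a + b) = chi a * chi b.

(* elements of the character group hat H, identified with families of
   characters alpha_(i) of the H_i *)
Definition is_char_family (alpha : forall i, H i -> algC) : Prop :=
  forall i, is_character (alpha i).

Definition char_app (alpha : forall i, H i -> algC) (beta : codeword) : algC :=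
  \prod_(i : Omega) alpha i (beta i).

Definition char_supp (alpha : forall i, H i -> algC) : {set Omega} :=
  [set i | ~~ [forall h : H i, alpha i h == 1]].

Definition char_wt (le : rel Omega) (alpha : forall i, H i -> algC) : nat :=
  #|ideal le (char_supp alpha)|.

Definition Fpoly (le : rel Omega) (alpha : forall i, H i -> algC) : {poly algC} :=
  \sum_(l < #|Omega|.+1)
     (\sum_(beta : codeword | wt le beta == l) char_app alpha beta) *: 'X^l.

End Defs.

Definition deg (p : {poly algC}) : nat := (size p).-1.

From Pilot Require Import Defs.
From mathcomp Require Import all_boot all_algebra all_field zify.
From mathcomp Require Import fingroup action classfun character.
Set Implicit Arguments. Unset Strict Implicit. Unset Printing Implicit Defensive.
Import GRing.Theory Num.Theory.

(* For a character family alpha with support S, the coefficient of x^l in F(alpha)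
   is the sum, over the l-element down-sets I, of alpha(beta) for the codewords beta
   whose support generates I. Translating beta at a point s of S by some h with
   alpha_s(h) <> 1 shows that this sum vanishes as soon as I contains an element
   strictly above S; for D := complement of the strict up-set of S it factorizes
   into character sums that are all nonzero. So deg F(alpha) = n - |strict up-set
   of S|, while the dual weight of alpha is |up-set of S|, so the theorem reduces
   to: P is hierarchical iff |up-set of S| determines |strict up-set of S|.
   In a hierarchical poset the strict up-set of S is the set of elements of level
   above the least level m of S, and |up-set of S| lies in a range that pins m down.
   Otherwise P contains a < b and c incomparable to both; taking b covering a and c
   maximal, {a} and {c} U (strict up-set of a) have up-sets of the same size but
   strict up-sets of different sizes. *)

Section Poset.
Variables (Omega : finType) (le : rel Omega).
Hypothesis le_poset : is_poset le.

Let le_refl : reflexive le. Proof. by case: le_poset. Qed.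
Let le_anti : antisymmetric le. Proof. by case: le_poset. Qed.
Let le_trans : transitive le. Proof. by case: le_poset. Qed.

Definition slt x y := (x != y) && le x y.

Definition incomparable x y := ~~ le x y && ~~ le y x.

Definition strict_up (S : {set Omega}) := [set x | [exists s in S, slt s x]].

Local Notation upset S := (ideal (dual_rel le) S).
Local Notation len := (len le).

Lemma slt_le_trans x y z : slt x y -> le y z -> slt x z.
Proof.
case/andP=> neq_xy le_xy le_yz; rewrite /slt (le_trans le_xy le_yz) andbT.
apply: contraNneq neq_xy => eq_xz; rewrite -eq_xz in le_yz.
by apply/eqP/le_anti; rewrite le_xy le_yz.
Qed.

Lemma le_slt_trans x y z : le x y -> slt y z -> slt x z.
Proof.
move=> le_xy /andP[neq_yz le_yz]; rewrite /slt (le_trans le_xy le_yz) andbT.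
apply: contraNneq neq_yz => eq_xz; rewrite eq_xz in le_xy.
by apply/eqP/le_anti; rewrite le_yz le_xy.
Qed.

Lemma slt_irr x : slt x x = false.
Proof. by rewrite /slt eqxx. Qed.

Lemma is_chain_subset (C C' : {set Omega}) :
  C' \subset C -> is_chain le C -> is_chain le C'.
Proof.
move=> /subsetP sub /forall_inP chainC; apply/forall_inP => x /sub/chainC/forall_inP chainx.
by apply/forall_inP => y /sub/chainx.
Qed.

Lemma is_chain_setU1 (C : {set Omega}) x :
  is_chain le C -> {in C, forall c, le c x} -> is_chain le (x |: C).
Proof.
move=> /forall_inP chainC below_x.
apply/forall_inP => y /setU1P[-> | yC]; apply/forall_inP => z /setU1P[-> | zC].
- by rewrite le_refl.
- by rewrite below_x ?orbT.
- by rewrite below_x.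
- by move/forall_inP: (chainC y yC); apply.
Qed.

Lemma len_max y (C : {set Omega}) :
  is_chain le C -> y \in C -> {in C, forall c, le c y} -> #|C| <= len y.
Proof.
move=> chainC yC below_y; apply: leq_bigmax_cond.
by rewrite chainC yC; apply/forall_inP.
Qed.

Lemma len_witness y : exists C,
  [/\ is_chain le C, y \in C, {in C, forall c, le c y} & #|C| = len y].
Proof.
have chain_y : is_chain le [set y].
  rewrite -[[set y]]setU0; apply: is_chain_setU1 => [|c]; last by rewrite inE.
  by apply/forall_inP => c; rewrite inE.
have top_y : [&& is_chain le [set y], y \in [set y] & [forall c in [set y], le c y]].
  by rewrite chain_y set11; apply/forall_inP => c /set1P ->.
rewrite /Defs.len (@bigop.bigmax_eq_arg _ [set y]) //.
case: arg_maxnP => // C /and3P[chainC yC /forall_inP below_y] _.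
by exists C.
Qed.

Lemma len_lt x y : slt x y -> len x < len y.
Proof.
move=> lt_xy; have [C [chainC xC below_x <-]] := len_witness x.
have below_y : {in C, forall c, le c y}.
  by move=> c /below_x le_cx; apply: le_trans le_cx (andP lt_xy).2.
have yC : y \notin C.
  by apply: contraFN (slt_irr x) => /below_x; apply: slt_le_trans.
have -> : #|C|.+1 = #|y |: C| by rewrite cardsU1 yC.
apply: len_max; [exact: is_chain_setU1 | exact: setU11 |].
by move=> c /setU1P[-> | /below_y].
Qed.

Lemma len_le x y : le x y -> len x <= len y.
Proof.
move=> le_xy; have [-> // | neq_xy] := eqVneq x y.
by apply/ltnW/len_lt; rewrite /slt neq_xy.
Qed.

Lemma upset_strict_up S : upset S = S :|: strict_up S.
Proof.
apply/setP => x; rewrite !inE; apply/exists_inP/orP => [[s sS le_sx] | [xS | ]].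
- have [<- | neq_sx] := eqVneq s x; [by left | right].
  by apply/exists_inP; exists s; rewrite /slt ?neq_sx.
- by exists x; rewrite /dual_rel ?le_refl.
- by case/exists_inP=> s sS /andP[_ le_sx]; exists s.
Qed.

Lemma upset_eq0 S : (upset S == set0) = (S == set0).
Proof.
rewrite upset_strict_up; apply/eqP/eqP => [/setP S0 | ->].
  by apply/setP => x; have := S0 x; rewrite !inE; case: (x \in S).
by apply/setP => x; rewrite !inE; apply/existsP => -[s]; rewrite inE.
Qed.

Lemma strict_up_level (hier : hierarchical le) S : S != set0 ->
  exists m, strict_up S = [set x | m < len x] /\
            #|[set x | m < len x]| < #|upset S| <= #|[set x | m <= len x]|.
Proof.
case/set0Pn => s0 s0S.
case: (@arg_minnP _ s0 (mem S) len s0S) => s sS min_s.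
have up_level : strict_up S = [set x | len s < len x].
  apply/setP => x; rewrite !inE; apply/exists_inP/idP => [[t tS lt_tx] | lt_sx].
    exact: leq_ltn_trans (min_s t tS) (len_lt lt_tx).
  exists s => //; rewrite /slt hier ?addn1 // andbT.
  by apply: contraTneq lt_sx => ->; rewrite ltnn.
exists (len s); rewrite -up_level; split => //; apply/andP; split.
  apply/proper_card/properP; rewrite upset_strict_up; split; first exact: subsetUr.
  by exists s; [apply/setUP; left | rewrite up_level inE ltnn].
apply/subset_leq_card/subsetP => x; rewrite !inE => /exists_inP[t tS le_tx].
exact: leq_trans (min_s t tS) (len_le le_tx).
Qed.

Lemma hierarchical_card_strict_up : hierarchical le ->
  forall S S', #|upset S| = #|upset S'| -> #|strict_up S| = #|strict_up S'|.
Proof.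
move=> hier S S' eq_up.
have eq0_SS' : (S == set0) = (S' == set0).
  by rewrite -upset_eq0 -[S' == _]upset_eq0 -!cards_eq0 eq_up.
have [S0 | neS] := eqVneq S set0.
  by move: eq0_SS'; rewrite S0 eqxx => /esym/eqP ->.
have neS' : S' != set0 by rewrite -eq0_SS'.
have [m [-> /andP[lt_m le_m]]] := strict_up_level hier neS.
have [m' [-> /andP[lt_m' le_m']]] := strict_up_level hier neS'.
have level_sub k k' : k < k' -> #|[set x | k' <= len x]| <= #|[set x | k < len x]|.
  by move=> lt_kk'; apply/subset_leq_card/subsetP => x; rewrite !inE; apply: leq_trans lt_kk'.
suff -> : m = m' by [].
(* Distinct levels m < m' give disjoint ranges for #|upset S|. *)
by case: (ltngtP m m') => // /level_sub; lia.
Qed.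

Lemma two_plus_one u v : len u < len v -> ~~ le u v ->
  exists a b c, [/\ slt a b, incomparable c a & incomparable c b].
Proof.
move=> lt_uv nle_uv.
have nle_vu : ~~ le v u by apply: contraTN lt_uv => /len_le; rewrite leqNgt.
have [C [chainC vC below_v card_C]] := len_witness v.
case: (boolP [exists c in C, (c != v) && incomparable u c]).
  case/exists_inP => c cC /andP[neq_cv inc_uc]; exists c, v, u.
  by rewrite /slt neq_cv below_v // /incomparable nle_uv nle_vu.
rewrite negb_exists_in => /forall_inP comparable_u.
have below_u : {in C :\ v, forall c, le c u}.
  move=> c /setD1P[neq_cv cC]; move: (comparable_u c cC).
  rewrite neq_cv /= /incomparable negb_and !negbK => /orP[le_uc | //].
  by rewrite (le_trans le_uc (below_v c cC)) in nle_uv.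
have uC : u \notin C by apply: contra nle_uv => /below_v.
have chain_u : is_chain le (u |: C :\ v).
  exact: is_chain_setU1 (is_chain_subset (subsetDl C [set v]) chainC) below_u.
have below_u' : {in u |: C :\ v, forall c, le c u} by move=> c /setU1P[-> | /below_u].
have card_swap : #|u |: C :\ v| = #|C|.
  by rewrite cardsU1 in_setD1 (negbTE uC) andbF (cardsD1 v C) vC.
by have := len_max chain_u (setU11 u _) below_u'; rewrite card_swap card_C leqNgt lt_uv.
Qed.

Lemma two_plus_one_refine a b0 c0 : slt a b0 -> incomparable c0 a -> incomparable c0 b0 ->
  exists b c, [/\ slt a b, forall y, slt a y -> ~~ slt y b, ~~ le a c,
                 forall y, slt c y -> slt a y & ~~ le c b].
Proof.
move=> lt_ab0 inc_c0a inc_c0b0.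
pose P x := incomparable x a && incomparable x b0.
have [c Pc max_c] := @arg_maxnP _ c0 P len (introT andP (conj inc_c0a inc_c0b0)).
have ab0_b0 : slt a b0 && le b0 b0 by rewrite lt_ab0 le_refl.
have [b /andP[lt_ab le_bb0] min_b] :=
  @arg_minnP _ b0 (fun y => slt a y && le y b0) len ab0_b0.
move: Pc; rewrite /P /incomparable => /andP[/andP[nle_ca nle_ac] /andP[nle_cb0 _]].
exists b, c; split => //.
- move=> y lt_ay; apply/negP => lt_yb.
  have /= := min_b y; rewrite lt_ay (le_trans (andP lt_yb).2 le_bb0) => /(_ isT).
  by rewrite leqNgt (len_lt lt_yb).
- move=> y lt_cy.
  have notPy : ~~ P y by apply: contraTN (len_lt lt_cy) => /max_c le_yc; rewrite -leqNgt.
  have nle_ya : ~~ le y a by apply: contra nle_ca; apply: le_trans (andP lt_cy).2.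
  have nle_yb0 : ~~ le y b0 by apply: contra nle_cb0; apply: le_trans (andP lt_cy).2.
  move: notPy; rewrite /P /incomparable nle_ya nle_yb0 /= negb_and !negbK.
  case/orP => [le_ay | le_b0y].
    by rewrite /slt le_ay andbT; apply: contraNneq nle_ya => ->.
  exact: slt_le_trans lt_ab0 le_b0y.
- by apply: contra nle_cb0 => le_cb; apply: le_trans le_cb le_bb0.
Qed.

Lemma card_upset_covering a b c :
  slt a b -> (forall y, slt a y -> ~~ slt y b) -> ~~ le a c ->
  (forall y, slt c y -> slt a y) -> ~~ le c b ->
  #|upset [set a]| = #|upset (c |: strict_up [set a])| /\
  #|strict_up (c |: strict_up [set a])| < #|strict_up [set a]|.
Proof.
move=> lt_ab cover_ab nle_ac up_c nle_cb.
set U := strict_up [set a].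
have U_E x : (x \in U) = slt a x.
  by rewrite inE; apply/exists_inP/idP => [[t /set1P -> //] | lt_ax]; exists a; rewrite ?inE.
have sub_U : strict_up (c |: U) \subset U :\ b.
  apply/subsetP => x; rewrite inE => /exists_inP[t /setU1P[-> | tU] lt_tx]; rewrite in_setD1 U_E.
    by rewrite up_c // andbT; apply: contraNneq nle_cb => <-; apply: (andP lt_tx).2.
  rewrite U_E in tU; rewrite (slt_le_trans tU (andP lt_tx).2) andbT.
  by apply: contraTneq (cover_ab t tU) => <-; rewrite negbK.
have up_cU : upset (c |: U) = c |: U.
  rewrite upset_strict_up; apply/setUidPl/(subset_trans sub_U).
  exact: subset_trans (subsetDl _ _) (subsetUr _ _).
split.
  by rewrite upset_strict_up up_cU -/U !cardsU1 !U_E slt_irr /slt (negbTE nle_ac) andbF.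
apply: leq_ltn_trans (subset_leq_card sub_U) _.
by rewrite (cardsD1 b U) U_E lt_ab.
Qed.

Lemma card_strict_up_hierarchical :
  (forall S S', #|upset S| = #|upset S'| -> #|strict_up S| = #|strict_up S'|) ->
  hierarchical le.
Proof.
move=> card_up u v; rewrite addn1 => lt_uv; apply/negPn/negP => nle_uv.
have [a [b0 [c0 [lt_ab0 inc_a inc_b0]]]] := two_plus_one lt_uv nle_uv.
have [b [c [lt_ab cover_ab nle_ac up_c nle_cb]]] := two_plus_one_refine lt_ab0 inc_a inc_b0.
have [eq_up lt_up] := card_upset_covering lt_ab cover_ab nle_ac up_c nle_cb.
by rewrite (card_up _ _ eq_up) ltnn in lt_up.
Qed.

Lemma hierarchicalP : hierarchical le <->
  (forall S S', #|upset S| = #|upset S'| -> #|strict_up S| = #|strict_up S'|).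
Proof.
split; [exact: hierarchical_card_strict_up | exact: card_strict_up_hierarchical].
Qed.

Lemma ideal_setD1 (B : {set Omega}) s x :
  slt s x -> x \in ideal le B -> ideal le B = ideal le (B :\ s).
Proof.
move=> lt_sx; rewrite inE => /exists_inP[c cB le_xc].
have neq_cs : c != s.
  apply: contraFneq (slt_irr x) => eq_cs; rewrite -eq_cs in lt_sx.
  exact: le_slt_trans le_xc lt_sx.
apply/setP => y; rewrite !inE.
apply/exists_inP/exists_inP => [[d dB le_yd] | [d /setD1P[_ dB] le_yd]].
  have [eq_ds | neq_ds] := eqVneq d s; last by exists d; rewrite ?in_setD1 ?neq_ds.
  exists c; first by rewrite in_setD1 neq_cs.
  by rewrite eq_ds in le_yd; apply: le_trans le_yd (le_trans (andP lt_sx).2 le_xc).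
by exists d.
Qed.

Lemma ideal_eq_setD1 (B B' : {set Omega}) s x :
  slt s x -> B :\ s = B' :\ s -> x \in ideal le B -> ideal le B' = ideal le B.
Proof.
move=> lt_sx eq_BB' xB.
have xB' : x \in ideal le B'.
  have := xB; rewrite (ideal_setD1 lt_sx xB) eq_BB' !inE.
  by case/exists_inP => c /setD1P[_ cB'] le_xc; apply/exists_inP; exists c.
by rewrite (ideal_setD1 lt_sx xB) (ideal_setD1 lt_sx xB') eq_BB'.
Qed.

Definition maximal (D : {set Omega}) :=
  [set x in D | [forall y in D, le x y ==> (y == x)]].

Lemma maximal_above (D : {set Omega}) x : x \in D -> exists2 m, m \in maximal D & le x m.
Proof.
move=> xD; have Dx_x : (x \in D) && le x x by rewrite xD le_refl.
have [m /andP[mD le_xm] max_m] := @arg_maxnP _ x (fun y => (y \in D) && le x y) len Dx_x.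
exists m => //; rewrite inE mD; apply/forall_inP => y yD; apply/implyP => le_my.
have /= := max_m y; rewrite yD (le_trans le_xm le_my) => /(_ isT).
by apply: contraTT => neq_ym; rewrite -ltnNge len_lt // /slt eq_sym neq_ym.
Qed.

Lemma ideal_eq_down_closed (D B : {set Omega}) :
  (forall x y, le x y -> y \in D -> x \in D) ->
  (ideal le B == D) = (B \subset D) && (maximal D \subset B).
Proof.
move=> down_D; apply/eqP/andP => [<- | [/subsetP sub_BD /subsetP sub_MB]].
  split; apply/subsetP => x; first by move=> xB; rewrite inE; apply/exists_inP; exists x.
  rewrite !inE => /andP[/exists_inP[c cB le_xc] /forall_inP max_x].
  have cD : c \in ideal le B by rewrite inE; apply/exists_inP; exists c.
  by have /implyP/(_ le_xc)/eqP <- := max_x c cD.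
apply/setP => x; rewrite inE; apply/exists_inP/idP => [[c /sub_BD cD le_xc] | xD].
  exact: down_D le_xc cD.
by have [m /sub_MB mB le_xm] := maximal_above xD; exists m.
Qed.

Lemma strict_upC_down_closed S x y :
  le x y -> y \in ~: strict_up S -> x \in ~: strict_up S.
Proof.
move=> le_xy; rewrite !inE; apply: contra => /exists_inP[s sS lt_sx].
by apply/exists_inP; exists s => //; apply: slt_le_trans lt_sx le_xy.
Qed.

Lemma notin_maximal_strict_upC S x :
  x \in ~: strict_up S -> x \notin maximal (~: strict_up S) -> x \notin S.
Proof.
move=> xD; rewrite inE xD negb_forall_in => /exists_inP[y yD].
rewrite negb_imply => /andP[le_xy neq_yx]; move: yD; rewrite inE; apply: contra => xS.
by rewrite inE; apply/exists_inP; exists x; rewrite // /slt eq_sym neq_yx.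
Qed.

End Poset.

Local Open Scope ring_scope.

Section Characters.
Variable U : finZmodType.
Implicit Type chi : U -> algC.

Lemma sum_char_nontrivial chi :
  is_character chi -> ~~ [forall h, chi h == 1] -> \sum_h chi h = 0.
Proof.
case=> _ chiD; rewrite negb_forall => /existsP[h0 chi_h0].
have shift_sum : \sum_h chi h = chi h0 * \sum_h chi h.
  by rewrite {1}(reindex_inj (addrI h0)) mulr_sumr; apply: eq_bigr => h _; rewrite chiD.
have : (1 - chi h0) * \sum_h chi h = 0 by rewrite mulrBl mul1r -shift_sum subrr.
by move/eqP; rewrite mulf_eq0 subr_eq0 eq_sym (negbTE chi_h0) => /eqP.
Qed.

Lemma sum_char_trivial chi : [forall h, chi h == 1] -> \sum_h chi h = #|U|%:R.
Proof.
by move/forallP => chi1; rewrite (eq_bigr (fun=> 1)) ?sumr_const ?cardT // => h _; apply/eqP.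
Qed.

Lemma sum_trivial_char_neq0 chi : [forall h, chi h == 1] -> \sum_h chi h != 0.
Proof.
by move/sum_char_trivial ->; rewrite pnatr_eq0 -lt0n; apply/card_gt0P; exists 0.
Qed.

Lemma sum_char_nonzero_neq0 chi :
  (1 < #|U|)%N -> is_character chi -> \sum_(h | h != 0) chi h != 0.
Proof.
move=> U_gt1 [chi0 chiD].
have -> : \sum_(h | h != 0) chi h = \sum_h chi h - 1.
  by rewrite [in RHS](bigD1 0) //= chi0 addrAC subrr add0r.
have [triv | nontriv] := boolP [forall h, chi h == 1].
  by rewrite sum_char_trivial // subr_eq0 pnatr_eq1 neq_ltn U_gt1 orbT.
by rewrite sum_char_nontrivial // sub0r oppr_eq0 oner_neq0.
Qed.

(* A nonprincipal irreducible character of the abelian group U is linear. *)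
Definition nontrivial_char : U -> algC :=
  if [pick i : Iirr [set: U]%G | i != 0] is Some i then 'chi_i else fun=> 1.

Lemma nontrivial_char_spec : (1 < #|U|)%N ->
  is_character nontrivial_char /\ ~~ [forall h, nontrivial_char h == 1].
Proof.
move=> U_gt1; pose G := [set: U]%G.
have abG : abelian G by apply: FinRing.zmod_abelian.
rewrite /nontrivial_char; case: pickP => [i nz_i | no_nz]; last first.
  have Nirr_gt1 : (1 < Nirr G)%N.
    by move: abG; rewrite NirrE card_classes_abelian cardsT => /eqP ->.
  by have := no_nz (Ordinal Nirr_gt1).
have lin_i := char_abelianP G abG i.
split; first split.
- by rewrite -FinRing.zmod1gE lin_char1.
- by move=> a b; rewrite -FinRing.zmodMgE lin_charM ?inE.
apply: contra nz_i => /forallP chi_i1; apply/eqP/irr_inj; rewrite irr0.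
by apply/cfunP => x; rewrite cfun1E inE; apply/eqP.
Qed.

End Characters.

Lemma sum_dffun_prod (R : comNzRingType) (I : finType) (T_ : I -> finType)
    (g : forall i, T_ i -> R) :
  \sum_(b : {dffun forall i, T_ i}) \prod_i g i (b i) = \prod_i \sum_(h : T_ i) g i h.
Proof.
rewrite (reindex (@dffun_of_fprod I T_)); last exact/onW_bij/dffun_of_fprod_bij.
pose G i := [ffun h => g i h] : {ffun T_ i -> R}.
have prod_G t : \prod_i g i (dffun_of_fprod t i) = \prod_i G i (t i).
  by apply: eq_bigr => i _; rewrite !ffunE.
under eq_bigr do rewrite prod_G.
have sum_G i : \sum_(h : T_ i) g i h = \sum_(j in tagged_with T_ i) untag 0 (G i) j.
  rewrite (big_tag g); apply: eq_bigr => j _.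
  by rewrite /untag; case: eqP => // e; rewrite ffunE.
by under [RHS]eq_bigr do rewrite sum_G; rewrite (big_fprod _ _ G) bigA_distr_big_dep.
Qed.

Lemma sum_dffun_prod_cond (R : comNzRingType) (I : finType) (T_ : I -> finType)
    (Q : forall i, pred (T_ i)) (g : forall i, T_ i -> R) :
  \sum_(b : {dffun forall i, T_ i} | [forall i, Q i (b i)]) \prod_i g i (b i) =
  \prod_i \sum_(h | Q i h) g i h.
Proof.
have prod_cond (b : {dffun forall i, T_ i}) :
    (if [forall i, Q i (b i)] then \prod_i g i (b i) else 0) =
    \prod_i if Q i (b i) then g i (b i) else 0.
  case: (boolP [forall i, Q i (b i)]) => [/forallP Qb | /forallPn[i nQi]].
    by apply: eq_bigr => i _; rewrite Qb.
  by rewrite (bigD1 i) //= (negbTE nQi) mul0r.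
rewrite big_mkcond; under eq_bigr do rewrite prod_cond.
rewrite (sum_dffun_prod (fun i h => if Q i h then g i h else 0)).
by apply: eq_bigr => i _; rewrite [RHS]big_mkcond.
Qed.

Lemma deg_eq_of_coef (p : {poly algC}) d :
  p`_d != 0 -> (forall j, (d < j)%N -> p`_j = 0) -> deg p = d.
Proof.
move=> pd_neq0 p_high.
have le_size : (size p <= d.+1)%N by apply/leq_sizeP.
have lt_size : (d < size p)%N by rewrite ltnNge; apply: contra pd_neq0 => /leq_sizeP ->.
by rewrite /deg; lia.
Qed.

Section Fpoly.
Variables (Omega : finType) (H : Omega -> finZmodType) (le : rel Omega).
Variable alpha : forall i, H i -> algC.
Arguments alpha : clear implicits.
Hypothesis le_poset : is_poset le.
Hypothesis alpha_char : is_char_family alpha.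

Let alpha0 i : alpha i 0 = 1. Proof. by case: (alpha_char i). Qed.
Let alphaD i (x y : H i) : alpha i (x + y) = alpha i x * alpha i y.
Proof. by case: (alpha_char i). Qed.

Definition translate s (h : H s) (b : codeword H) : codeword H :=
  [ffun i => b i + @dfwith _ H (fun j => 0) s h i].

Lemma translate_inj s (h : H s) : injective (translate h).
Proof.
by move=> b b' /ffunP eq_bb'; apply/ffunP => i; move: (eq_bb' i); rewrite !ffunE => /addIr.
Qed.

Lemma supp_translate s (h : H s) b : supp (translate h b) :\ s = supp b :\ s.
Proof.
apply/setP => i; have [-> | neq_is] := eqVneq i s; first by rewrite !setD11.
by rewrite !in_setD1 neq_is !inE ffunE dfwith_out ?addr0 // eq_sym.
Qed.

Lemma char_app_translate s (h : H s) b :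
  char_app alpha (translate h b) = char_app alpha b * alpha s h.
Proof.
rewrite /char_app; under eq_bigr do rewrite ffunE alphaD.
rewrite big_split /=; congr (_ * _).
rewrite (bigD1 s) //= dfwith_in big1 ?mulr1 // => i neq_is.
by rewrite dfwith_out ?alpha0 // eq_sym.
Qed.

Definition ideal_sum (I : {set Omega}) : algC :=
  \sum_(b : codeword H | ideal le (supp b) == I) char_app alpha b.

Local Notation D := (~: strict_up le (char_supp alpha)).

Lemma ideal_sum_eq0 (I : {set Omega}) : ~~ (I \subset D) -> ideal_sum I = 0.
Proof.
case/subsetPn => x xI; rewrite !inE negbK => /exists_inP[s].
rewrite inE negb_forall => /existsP[h nontriv_h] lt_sx.
have same_ideal b : (ideal le (supp (translate h b)) == I) = (ideal le (supp b) == I).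
  apply/eqP/eqP => eq_I; rewrite -eq_I; apply: (ideal_eq_setD1 le_poset lt_sx);
  by rewrite ?supp_translate ?eq_I.
have : ideal_sum I = ideal_sum I * alpha s h.
  rewrite {1}/ideal_sum (reindex_inj (@translate_inj s h)) mulr_suml.
  by apply: eq_big => [b | b _]; [exact: same_ideal | exact: char_app_translate].
move/eqP; rewrite -subr_eq0 -{1}[ideal_sum I]mulr1 -mulrBr mulf_eq0 subr_eq0.
by rewrite [1 == _]eq_sym (negbTE nontriv_h) orbF => /eqP.
Qed.

Lemma ideal_sum_neq0 : (forall i, 1 < #|H i|)%N -> ideal_sum D != 0.
Proof.
move=> H_gt1.
pose Q i (h : H i) := if i \in D then (i \in maximal le D) ==> (h != 0) else h == 0.
have ideal_D b : (ideal le (supp b) == D) = [forall i, Q i (b i)].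
  rewrite ideal_eq_down_closed //; last exact: strict_upC_down_closed.
  apply/andP/forallP => [[/subsetP sub_D /subsetP sub_M] i | Qb].
    rewrite /Q; case: ifP => iD; first by apply/implyP => /sub_M; rewrite inE.
    by rewrite -[_ == 0]negbK; apply: contra (negbT iD) => nz_i; apply: sub_D; rewrite inE.
  split; apply/subsetP => i.
    by rewrite inE => nz_i; move: (Qb i); rewrite /Q; case: (i \in D); rewrite ?(negbTE nz_i).
  by move=> max_i; have /setIdP[iD _] := max_i; move: (Qb i); rewrite /Q iD max_i inE.
rewrite /ideal_sum; under eq_bigl do rewrite ideal_D.
rewrite (sum_dffun_prod_cond Q alpha); apply/prodf_neq0 => i _; rewrite /Q.
have [iD | niD] := boolP (i \in D); last by rewrite big_pred1_eq alpha0 oner_neq0.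
have [iM | niM] := boolP (i \in maximal le D); first exact: sum_char_nonzero_neq0.
apply: sum_trivial_char_neq0.
by have := notin_maximal_strict_upC iD niM; rewrite inE negbK.
Qed.

Lemma coef_Fpoly l : (Fpoly le alpha)`_l =
  if (l <= #|Omega|)%N then \sum_(I : {set Omega} | #|I| == l) ideal_sum I else 0.
Proof.
pose c l := \sum_(b : codeword H | wt le b == l) char_app alpha b.
rewrite /Fpoly -(poly_def _ c) coef_poly ltnS {}/c; case: ifP => // _.
rewrite (partition_big (fun b => ideal le (supp b)) (fun I : {set Omega} => #|I| == l)) //=.
apply: eq_bigr => I /eqP card_I; apply: eq_bigl => b.
by apply/andP/idP => [[] // | /eqP eq_I]; rewrite /wt eq_I card_I.
Qed.

Lemma deg_Fpoly : (forall i, 1 < #|H i|)%N -> deg (Fpoly le alpha) = #|D|.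
Proof.
move=> H_gt1; apply: deg_eq_of_coef => [|j lt_Dj]; rewrite coef_Fpoly.
  rewrite max_card (bigD1 D) //= big1 ?addr0 ?ideal_sum_neq0 // => I /andP[/eqP card_I neq_ID].
  by apply: ideal_sum_eq0; apply: contra neq_ID => sub_ID; rewrite eqEcard sub_ID card_I leqnn.
case: ifP => // _; rewrite big1 // => I /eqP card_I.
by apply: ideal_sum_eq0; apply: contraTN lt_Dj => /subset_leq_card; rewrite card_I -leqNgt.
Qed.

End Fpoly.

Section CharOn.
Variables (Omega : finType) (H : Omega -> finZmodType).
Hypothesis H_gt1 : forall i, (1 < #|H i|)%N.

Definition char_on (S : {set Omega}) : forall i, H i -> algC :=
  fun i => if i \in S then @nontrivial_char (H i) else fun=> 1.

Lemma char_on_family S : is_char_family (char_on S).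
Proof.
move=> i; rewrite /char_on; case: (i \in S); first by case: (nontrivial_char_spec (H_gt1 i)).
by split=> // a b; rewrite mulr1.
Qed.

Lemma char_supp_char_on S : char_supp (char_on S) = S.
Proof.
apply/setP => i; rewrite inE /char_on.
by case: (i \in S); [case: (nontrivial_char_spec (H_gt1 i)) | apply/negbF/forallP].
Qed.

End CharOn.

Unset Implicit Arguments.

Theorem theorem2p3 (Omega : finType) (H : Omega -> finZmodType) (le : rel Omega) :
  (forall i, (1 < #|H i|)%N) ->
  is_poset le ->
  hierarchical le <->
  (forall alpha gamma : forall i, H i -> algC,
     is_char_family alpha -> is_char_family gamma ->
     char_wt (dual_rel le) alpha = char_wt (dual_rel le) gamma ->
     deg (Fpoly le alpha) = deg (Fpoly le gamma)).
Proof.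
move=> H_gt1 le_poset; rewrite (hierarchicalP le_poset).
split=> [card_up alpha gamma alpha_char gamma_char eq_wt | deg_eq S S' eq_up].
  by rewrite !deg_Fpoly // [LHS]cardsCs [RHS]cardsCs !setCK (card_up _ _ eq_wt).
have char_on_S T := char_on_family H_gt1 T.
have := deg_eq _ _ (char_on_S S) (char_on_S S'); rewrite /char_wt !char_supp_char_on //.
rewrite !deg_Fpoly // !char_supp_char_on // => /(_ eq_up) eq_deg.
by rewrite (cardsCs (strict_up le S)) eq_deg -cardsCs.
Qed.
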